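(* Let $G$ and $H$ be decision structures. Then $G$ and $H$ are structurally equivalent if and only if they are isomorphic as arc-labelled graphs, i.e. there is a bijection $\Gamma:N(G)\to N(H)$ such that for all $u,v\in N(G)$ we have $(u,v)\in A(G)$ iff $(\Gamma(u),\Gamma(v))\in A(H)$, and in that case $\ell_G(u,v)=\ell_H(\Gamma(u),\Gamma(v))$.
   Context: Fix a nonempty set $\mathbb{W}$ of states, a set $\mathbb{S}$ of signals with at least two elements, and a set $\mathcal{R}$ of return values. An action is a pair $\alpha=(\alpha_B,\alpha_R)$ of functions $\alpha_B:\mathbb{W}\to\mathbb{S}$ and $\alpha_R:\mathbb{W}\to\mathcal{R}$; $\mathcal{A}$ denotes the set of all actions. A decision structure is a finite directed acyclic graph $Z=(N,A)$, $A\subseteq N\times N$, with a unique source (node with no incoming arc), together with an arc labelling $\ell:A\to\mathcal{R}$ and a node labelling $\eta:N\to\mathcal{A}$, such that distinct arcs leaving the same node have distinct labels; the arc out of $v$ labelled $r$, if it exists, is called the $r$-arc out of $v$. For a state $w$, the action $Z(w)$ selected by $Z$ is obtained as follows: start at the source; at the current node $v$ with $\eta(v)=\alpha$, if the $\alpha_R(w)$-arc out of $v$ exists move to its head and repeat, otherwise output $\alpha$. Two decision structures $G,H$ are structurally equivalent if they have the same number $n$ of nodes and there are enumerations $g_1,\dots,g_n$ of $N(G)$ and $h_1,\dots,h_n$ of $N(H)$ such that for every choice of actions $\alpha_1,\dots,\alpha_n$, relabelling $g_i$ and $h_i$ by $\alpha_i$ for all $i$ yields $G(w)=H(w)$ for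 every state $w$ (the original node labels play no role). It is assumed that $\mathcal{R}$ contains at least one value that does not label any arc of $G$ or $H$. *)

From mathcomp Require Import all_boot.
Set Implicit Arguments. Unset Strict Implicit. Unset Printing Implicit Defensive.

Definition action (W S Rv : Type) : Type := ((W -> S) * (W -> Rv))%type.

(* A decision structure: a finite DAG (node set a finType, arc set a boolean
   relation) with a unique source, an arc labelling (only meaningful on arcs),
   and a node labelling, such that distinct arcs out of a node have distinct
   labels. *)
Record dstruct (W S Rv : Type) := DStruct {
  node : finType;
  darc : rel node;
  dlab : node -> node -> Rv;
  deta : node -> action W S Rv;
  dsrc : node;
  ds_acyclic : forall u v : node, darc u v -> ~~ connect darc v u;
  ds_source : forall v : node, (forall u, ~~ darc u v) <-> v = dsrc;
  ds_labels : forall v u1 u2 : node,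
      darc v u1 -> darc v u2 -> dlab v u1 = dlab v u2 -> u1 = u2
}.

Section Run.
Variables (W S Rv : Type) (Z : dstruct W S Rv).

(* [runs et w v t]: with node labelling [et], state [w], the traversal
   started at node [v] ends (outputs the label of) node [t]. *)
Inductive runs (et : node Z -> action W S Rv) (w : W) : node Z -> node Z -> Prop :=
| runs_stop v :
    (forall u, darc v u -> dlab v u <> (et v).2 w) -> runs et w v v
| runs_step v u t :
    darc v u -> dlab v u = (et v).2 w -> runs et w u t -> runs et w v t.

Definition selects (et : node Z -> action W S Rv) (w : W) (a : action W S Rv) : Prop :=
  exists t, runs et w (dsrc Z) t /\ et t = a.

End Run.

Definition struct_equiv (W S Rv : Type) (G H : dstruct W S Rv) : Prop :=
  exists (n : nat) (g : 'I_n -> node G) (h : 'I_n -> node H),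
    bijective g /\ bijective h /\
    forall (alpha : 'I_n -> action W S Rv)
           (etG : node G -> action W S Rv) (etH : node H -> action W S Rv),
      (forall i, etG (g i) = alpha i) -> (forall i, etH (h i) = alpha i) ->
      forall (w : W) (a : action W S Rv), selects etG w a <-> selects etH w a.

Definition arc_iso (W S Rv : Type) (G H : dstruct W S Rv) : Prop :=
  exists Gam : node G -> node H,
    bijective Gam /\
    forall u v : node G,
      (darc u v = darc (Gam u) (Gam v)) /\
      (darc u v -> dlab u v = dlab (Gam u) (Gam v)).

From mathcomp Require Import all_boot.
Set Implicit Arguments. Unset Strict Implicit. Unset Printing Implicit Defensive.

(* Both notions are compared through an intermediate one: a bijection
   Gam : N(G) -> N(H) is relabelling-invariant if, whenever H is labelled by
   transporting the labels of G along Gam, G and H select the same action at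
   every state.  Structural equivalence is exactly the existence of such a
   bijection (take Gam = h o g^-1).

   - An arc isomorphism is relabelling-invariant: it maps traversals of G to
     traversals of H step by step, and it maps the source to the source.
   - Conversely, fix a state w0, two signals s1 <> s2 and a return value r0
     labelling no arc.  "Marking" a node t with s1 (all others with s2) makes
     the node selected by H visible, so invariance forces H to end at Gam t
     whenever G ends at t.  By induction on the ancestors of u we build return
     labellings [steering] the traversal of G to u and being r0 off the
     ancestors of u and of Gam u; redirecting the traversal along an arc
     (u, v) then forces H to take the arc (Gam u, Gam v) with the same label.
     Applying this to Gam and to its inverse gives the arc isomorphism. *)

Local Notation "x ~>* y" := (connect (@darc _ _ _ _) x y) (at level 70).

Section Walks.
Variables (W S Rv : Type) (Z : dstruct W S Rv).
Implicit Types (et : node Z -> action W S Rv) (w : W) (x t v : node Z).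

(* [walk et w x t]: following return values from [x] can lead to [t];
   unlike [runs], the walk need not stop at [t]. *)
Inductive walk et w : node Z -> node Z -> Prop :=
| walk_refl v : walk et w v v
| walk_step v u t : darc v u -> dlab v u = (et v).2 w -> walk et w u t -> walk et w v t.

Lemma walk_connect et w x t : walk et w x t -> x ~>* t.
Proof.
elim=> [v|v u t' Hvu _ _ IH]; first exact: connect0.
exact: connect_trans (connect1 Hvu) IH.
Qed.

Lemma runs_walk et w x t : runs et w x t -> walk et w x t.
Proof. by elim=> [v _|v u t' H1 H2 _ IH]; [exact: walk_refl | exact: walk_step IH]. Qed.

Lemma walk_trans et w x t t' : walk et w x t -> walk et w t t' -> walk et w x t'.
Proof. by elim=> // v u t0 H1 H2 _ IH /IH; exact: walk_step. Qed.

Lemma walk_runs et w x t :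
  walk et w x t -> (forall u, darc t u -> dlab t u <> (et t).2 w) -> runs et w x t.
Proof.
elim=> [v Hs|v u t0 H1 H2 _ IH Hs]; first exact: runs_stop.
exact: runs_step H1 H2 (IH Hs).
Qed.

(* By acyclicity a walk never revisits its endpoint, so changing the return
   values anywhere except at the endpoint preserves it. *)
Lemma walk_relabel et et' w x t :
  walk et w x t -> (forall y, y != t -> (et' y).2 w = (et y).2 w) -> walk et' w x t.
Proof.
elim=> [v _|v u t0 H1 H2 Hr IH Ha]; first exact: walk_refl.
apply: (walk_step H1) (IH Ha); rewrite Ha //; apply/eqP=> E; subst v.
by have := ds_acyclic H1; rewrite (walk_connect Hr).
Qed.

Lemma runs_inv et w x t :
  runs et w x t ->
  x = t /\ (forall u, darc x u -> dlab x u <> (et x).2 w) \/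
  exists z, [/\ darc x z, dlab x z = (et x).2 w & runs et w z t].
Proof. by case=> [v Hstop|v u t' H1 H2 H3]; [left | right; exists u]. Qed.

(* Traversals are deterministic: a traversal passes through every node its
   walks reach. *)
Lemma walk_runs_from et w x t t' : walk et w x t -> runs et w x t' -> runs et w t t'.
Proof.
elim=> // v u t0 H1 H2 _ IH /runs_inv [[_ Hstop]|[u' [H1' H2' Hrest]]].
  by case: (Hstop u H1).
have E : u = u' by apply: (ds_labels H1 H1'); rewrite H2 H2'.
by subst u'; exact: IH.
Qed.

End Walks.

Definition relabel_invariant (W S Rv : Type) (G H : dstruct W S Rv)
    (Gam : node G -> node H) : Prop :=
  forall (etG : node G -> action W S Rv) (etH : node H -> action W S Rv),
    (forall x, etH (Gam x) = etG x) ->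
    forall (w : W) (a : action W S Rv), selects etG w a <-> selects etH w a.

Definition arc_iso_map (W S Rv : Type) (G H : dstruct W S Rv)
    (Gam : node G -> node H) : Prop :=
  forall u v : node G,
    (darc u v = darc (Gam u) (Gam v)) /\ (darc u v -> dlab u v = dlab (Gam u) (Gam v)).

Section Bijections.
Variables (W S Rv : Type) (G H : dstruct W S Rv).
Variables (Gam : node G -> node H) (Gi : node H -> node G).
Hypotheses (GamK : cancel Gam Gi) (GiK : cancel Gi Gam).

Lemma relabel_invariant_inv : relabel_invariant Gam -> relabel_invariant Gi.
Proof.
move=> inv etH etG etE w a; apply: iff_sym; apply: inv => x.
by rewrite -etE GamK.
Qed.

Lemma arc_iso_map_inv : arc_iso_map Gam -> arc_iso_map Gi.
Proof.
move=> iso u v; have [arcE labE] := iso (Gi u) (Gi v); rewrite !GiK in arcE labE.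
by rewrite arcE; split=> // Huv; rewrite labE // arcE.
Qed.

Hypothesis iso : arc_iso_map Gam.

Lemma arc_iso_map_runs et et' w (x t : node G) :
  (forall x, et' (Gam x) = et x) -> runs et w x t -> runs et' w (Gam x) (Gam t).
Proof.
move=> etE; elim=> [v Hs|v u t' H1 H2 _ IH].
  apply: runs_stop => z; rewrite -(GiK z) -(iso _ _).1 => Hz.
  by rewrite -(iso _ _).2 // etE; apply: Hs.
apply: runs_step IH; first by rewrite -(iso _ _).1.
by rewrite -(iso _ _).2 // etE.
Qed.

Lemma arc_iso_map_source : Gam (dsrc G) = dsrc H.
Proof.
apply/(ds_source _).1 => z; rewrite -(GiK z) -(iso _ _).1.
by apply/negP => Hz; have := (ds_source (dsrc G)).2 erefl (Gi z); rewrite Hz.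
Qed.

End Bijections.

Lemma arc_iso_map_relabel_invariant (W S Rv : Type) (G H : dstruct W S Rv)
    (Gam : node G -> node H) :
  bijective Gam -> arc_iso_map Gam -> relabel_invariant Gam.
Proof.
case=> Gi GamK GiK iso; have iso' := arc_iso_map_inv GiK iso.
move=> etG etH etE w a; have etE' y : etG (Gi y) = etH y by rewrite -etE GiK.
split=> -[t [Ht <-]].
  exists (Gam t); rewrite etE -(arc_iso_map_source GiK iso); split=> //.
  exact: (arc_iso_map_runs GiK iso) Ht.
exists (Gi t); rewrite etE' -(arc_iso_map_source GamK iso'); split=> //.
exact: (arc_iso_map_runs GamK iso') Ht.
Qed.

(* Structural equivalence yields the relabelling-invariant bijection [h o g^-1]. *)
Lemma struct_equiv_relabel_invariant (W S Rv : Type) (G H : dstruct W S Rv) :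
  struct_equiv G H -> exists Gam : node G -> node H, bijective Gam /\ relabel_invariant Gam.
Proof.
case=> n [g [h [[gi gK giK] [[hi hK hiK] equiv]]]].
exists (fun x => h (gi x)); split.
  by exists (fun y => g (hi y)) => x; rewrite ?hK ?giK ?gK ?hiK.
move=> etG etH etE; apply: (equiv (fun i => etG (g i))) => // i.
by rewrite -etE gK.
Qed.

(* Conversely, enumerating [N(G)] and its image under a relabelling-invariant
   bijection witnesses structural equivalence. *)
Lemma relabel_invariant_struct_equiv (W S Rv : Type) (G H : dstruct W S Rv)
    (Gam : node G -> node H) :
  bijective Gam -> relabel_invariant Gam -> struct_equiv G H.
Proof.
case=> Gi GamK GiK inv.
exists #|node G|, enum_val, (fun i => Gam (enum_val i)).
split; first by exists enum_rank; [exact: enum_valK | exact: enum_rankK].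
split.
  exists (fun y => enum_rank (Gi y)) => x; first by rewrite GamK enum_valK.
  by rewrite enum_rankK GiK.
move=> alpha etG etH HG HH; apply: inv => x.
by rewrite -(enum_rankK x) HG HH.
Qed.

Section Steering.
Variables (W S Rv : Type) (G H : dstruct W S Rv).
Variables (w0 : W) (s1 s2 : S) (r0 : Rv).
Hypothesis s12 : s1 <> s2.
Hypothesis freshG : forall u v : node G, darc u v -> dlab u v <> r0.
Hypothesis freshH : forall u v : node H, darc u v -> dlab u v <> r0.
Variables (Gam : node G -> node H) (Gi : node H -> node G).
Hypotheses (GamK : cancel Gam Gi) (GiK : cancel Gi Gam).
Hypothesis invGam : relabel_invariant Gam.

Definition marking (rho : node G -> Rv) (t : node G) (x : node G) : action W S Rv :=
  (fun _ => if x == t then s1 else s2, fun _ => rho x).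

(* The mark makes the node selected in [H] identifiable: it must be [Gam t]. *)
Lemma marked_run_transfer rho t :
  runs (marking rho t) w0 (dsrc G) t ->
  runs (fun y => marking rho t (Gi y)) w0 (dsrc H) (Gam t).
Proof.
move=> Hrun; have etE x : marking rho t (Gi (Gam x)) = marking rho t x by rewrite GamK.
have selG : selects (marking rho t) w0 (marking rho t t) by exists t.
have [t' [Ht']] := (invGam (etH := fun y => marking rho t (Gi y)) etE w0 _).1 selG.
move/(congr1 (fun a => a.1 w0)); rewrite /= eqxx.
by case: eqP => [E _|_ /esym/s12 []]; rewrite (_ : Gam t = t') // -E GiK.
Qed.

Definition steers (rho : node G -> Rv) (u : node G) : Prop :=
  [/\ rho u = r0, runs (marking rho u) w0 (dsrc G) u,
      forall y, ~~ (y ~>* u) -> rho y = r0 &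
      forall y, ~~ (Gam y ~>* Gam u) -> rho y = r0].

Definition redirect (rho : node G -> Rv) (u : node G) (r : Rv) (x : node G) : Rv :=
  if x == u then r else rho x.

Section Redirect.
Variables (u v : node G) (rho : node G -> Rv).
Hypotheses (Huv : darc u v) (Hsteer : steers rho u).
Let rho' := redirect rho u (dlab u v).

Lemma redirect_neq : v != u.
Proof. by apply/eqP=> E; subst v; have := ds_acyclic Huv; rewrite connect0. Qed.

Lemma redirected_run_G : runs (marking rho' v) w0 (dsrc G) v.
Proof.
case: Hsteer => _ Hrun HoffG _.
apply: walk_runs.
  have lab_uv : dlab u v = (marking rho' v u).2 w0 by rewrite /= /rho' /redirect eqxx.
  apply: walk_trans (walk_step Huv lab_uv (walk_refl _ _ _)).
  by apply: (walk_relabel (runs_walk Hrun)) => y Hy /=; rewrite /rho' /redirect (negbTE Hy).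
move=> z Hz; rewrite /= /rho' /redirect (negbTE redirect_neq) HoffG; first exact: freshG.
exact: ds_acyclic Huv.
Qed.

(* Hence the traversal of [H] passes through [Gam u] and must leave it by an
   arc labelled [dlab u v]; past that arc the labels are fresh, so the arc
   ends at [Gam v]. *)
Lemma redirected_arc_H : darc (Gam u) (Gam v) /\ dlab u v = dlab (Gam u) (Gam v).
Proof.
case: Hsteer => _ Hrun _ HoffH.
have toGu : walk (fun y => marking rho' v (Gi y)) w0 (dsrc H) (Gam u).
  apply: (walk_relabel (runs_walk (marked_run_transfer Hrun))) => y Hy /=.
  by rewrite /rho' /redirect; case: eqP => // E; rewrite -E GiK eqxx in Hy.
have fromGu := walk_runs_from toGu (marked_run_transfer redirected_run_G).
case: (runs_inv fromGu) => [[/(can_inj GamK) E _]|[z [Hz Hlab Hrest]]].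
  by move: redirect_neq; rewrite E eqxx.
move: Hlab; rewrite /= GamK /rho' /redirect eqxx => Hlab.
case: (runs_inv Hrest) => [[E _]|[z' [Hz' Hlab' _]]]; first by subst z.
have Hnu : Gi z != u by apply/eqP=> E; move: (ds_acyclic Hz); rewrite -E GiK connect0.
move: Hlab'; rewrite /= /rho' /redirect (negbTE Hnu) HoffH; first by move/(freshH Hz').
by rewrite GiK; exact: ds_acyclic Hz.
Qed.

Lemma redirected_steers : steers rho' v.
Proof.
case: Hsteer => _ _ HoffG HoffH; have [Hz _] := redirected_arc_H.
split; first by rewrite /rho' /redirect (negbTE redirect_neq) HoffG // ds_acyclic.
- exact: redirected_run_G.
- move=> y Hy; rewrite /rho' /redirect; case: eqP => [E|_].
    by subst y; rewrite (connect1 Huv) in Hy.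
  by apply: HoffG; apply: contra Hy => Hy; exact: connect_trans Hy (connect1 Huv).
- move=> y Hy; rewrite /rho' /redirect; case: eqP => [E|_].
    by subst y; rewrite (connect1 Hz) in Hy.
  by apply: HoffH; apply: contra Hy => Hy; exact: connect_trans Hy (connect1 Hz).
Qed.

End Redirect.

(* Every node can be steered to, by induction on its set of ancestors: the
   source is steered to by the constant [r0], any other node by redirecting
   at one of its parents. *)
Lemma steers_exists u : exists rho, steers rho u.
Proof.
move: {2}#|_| (leqnn #|[set x | x ~>* u]|) => k.
elim: k u => [|k IH] u Hk.
  by move: Hk; rewrite leqn0 => /eqP/card0_eq/(_ u); rewrite inE connect0.
have [->|Hu] := eqVneq u (dsrc G).
  exists (fun _ => r0); split=> //.
  by apply: runs_stop => z Hz; apply: freshG.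
have [a Hau] : exists a, darc a u.
  apply/existsP; apply: contraR Hu => /existsPn Hn; apply/eqP.
  exact: (ds_source u).1 Hn.
have Hsub : [set x | x ~>* a] \proper [set x | x ~>* u].
  apply/properP; split.
    by apply/subsetP => x; rewrite !inE => Hx; exact: connect_trans Hx (connect1 Hau).
  by exists u; rewrite !inE ?connect0 //; exact: ds_acyclic Hau.
have [rho Hrho] := IH a (leq_trans (proper_card Hsub) Hk).
by exists (redirect rho a (dlab a u)); exact: redirected_steers.
Qed.

Lemma relabel_invariant_arc u v :
  darc u v -> darc (Gam u) (Gam v) /\ dlab u v = dlab (Gam u) (Gam v).
Proof.
by move=> Huv; have [rho Hrho] := steers_exists u; exact: (redirected_arc_H Huv Hrho).
Qed.

End Steering.

(* With a state, two distinct signals and a return value labelling no arc,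
   a relabelling-invariant bijection is an arc isomorphism: arcs are
   preserved by [Gam] and, applying the same argument to its inverse,
   reflected. *)
Lemma relabel_invariant_arc_iso (W S Rv : Type) (G H : dstruct W S Rv)
    (w0 : W) (s1 s2 : S) (r0 : Rv) (s12 : s1 <> s2)
    (freshG : forall u v : node G, darc u v -> dlab u v <> r0)
    (freshH : forall u v : node H, darc u v -> dlab u v <> r0)
    (Gam : node G -> node H) :
  bijective Gam -> relabel_invariant Gam -> arc_iso_map Gam.
Proof.
case=> Gi GamK GiK inv u v.
have fwd := relabel_invariant_arc w0 s12 freshG freshH GamK GiK inv.
have bwd := relabel_invariant_arc w0 s12 freshH freshG GiK GamK
  (relabel_invariant_inv GamK inv).
split; last by case/fwd.
by apply/idP/idP; [case/fwd | case/bwd; rewrite !GamK].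
Qed.

Theorem mainTheorem2 (W S Rv : Type) (G H : dstruct W S Rv)
  (hW : inhabited W)
  (hS : exists s1 s2 : S, s1 <> s2)
  (hR : exists r : Rv,
      (forall u v : node G, darc u v -> dlab u v <> r) /\
      (forall u v : node H, darc u v -> dlab u v <> r)) :
  struct_equiv G H <-> arc_iso G H.
Proof.
split.
- case/struct_equiv_relabel_invariant => Gam [bij inv].
  case: hW => w0; case: hS => s1 [s2 s12]; case: hR => r0 [freshG freshH].
  by exists Gam; split=> //; exact: relabel_invariant_arc_iso s12 freshG freshH Gam bij inv.
- case=> Gam [bij iso].
  exact: relabel_invariant_struct_equiv bij (arc_iso_map_relabel_invariant bij iso).
Qed.
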